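(* For every $n\ge 1$, the $\mathbb{Z}$-discriminating complexity of $\mathbb{Z}^n$ is asymptotically dominated by a polynomial of degree $n-1$, i.e. $C_{\mathbb{Z}^n}^{\mathbb{Z}} \preceq (R\mapsto R^{n-1})$.
   Context: A homomorphism $\phi: G \to H$ discriminates a finite set $S\subseteq G-\{1\}$ if $1\notin\phi(S)$. For finite generating sets $X$ of $G$, $Y$ of $H$, $|\phi|_X^Y := \max_{x\in X}|\phi(x)|_Y$, and $C_{G,X}^{H,Y}(R) := \min\{|\phi|_X^Y : \phi \text{ discriminates } B_R(G,X)-\{1\}\}$, with $B_R(G,X)$ the closed word-metric ball of radius $R$. For $f,g:\mathbb{N}\to\mathbb{N}$, $f\preceq g$ means there is $K$ with $f(R)\le Kg(KR)+K$ for all $R$; the $\preceq$-class of $C_{G,X}^{H,Y}$ is independent of $X,Y$ and denoted $C_G^H$. *)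

From HB Require Import structures.
From mathcomp Require Import all_boot all_order all_algebra.
Set Implicit Arguments. Unset Strict Implicit. Unset Printing Implicit Defensive.
Import Order.TTheory GRing.Theory Num.Theory.
Local Open Scope ring_scope.

(* Abelian groups are written additively (zmodType). *)

Definition is_hom (G H : zmodType) (phi : G -> H) : Prop :=
  forall x y : G, phi (x + y) = phi x + phi y.

Definition word_ball (G : zmodType) (X : seq G) (R : nat) (g : G) : Prop :=
  exists s : seq G,
    (size s <= R)%N /\ all (fun y => (y \in X) || (- y \in X)) s /\
    \sum_(y <- s) y = g.

Definition discriminates (G H : zmodType) (phi : G -> H) (S : G -> Prop) : Prop :=
  forall g, S g -> phi g <> 0.

(* |phi|_X^Y <= m, i.e. max_{x in X} |phi x|_Y <= m. *)
Definition hom_norm_le (G H : zmodType) (X : seq G) (Y : seq H)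
  (phi : G -> H) (m : nat) : Prop :=
  forall x, x \in X -> word_ball Y m (phi x).

(* C_{G,X}^{H,Y}(R) <= m : some homomorphism discriminating B_R(G,X) - {1}
   has |phi|_X^Y <= m (the minimum exists and is at most m). *)
Definition complexity_le (G H : zmodType) (X : seq G) (Y : seq H)
  (R m : nat) : Prop :=
  exists phi : G -> H, is_hom phi /\
    discriminates phi (fun g => word_ball X R g /\ g <> 0) /\
    hom_norm_le X Y phi m.

Definition complexity_preceq (G H : zmodType) (X : seq G) (Y : seq H)
  (f : nat -> nat) : Prop :=
  exists K : nat, forall R : nat, complexity_le X Y R (K * f (K * R) + K)%N.

(* Z^n as row vectors of integers, with its standard generating set. *)
Definition std_basis (n : nat) : seq 'rV[int]_n :=
  [seq delta_mx 0 i | i <- enum 'I_n].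

From HB Require Import structures.
From mathcomp Require Import all_boot all_order all_algebra.
From mathcomp Require Import zify.
Set Implicit Arguments. Unset Strict Implicit. Unset Printing Implicit Defensive.
Import Order.TTheory GRing.Theory Num.Theory.
Local Open Scope ring_scope.

(* Reading the coordinates of g in Z^n as the digits of an integer in base
   R + 1 gives a homomorphism Z^n -> Z.  On the R-ball every coordinate has
   absolute value at most R, so by uniqueness of (balanced) base-(R + 1)
   expansions the only element of the ball sent to 0 is 0 itself.  The i-th
   basis vector is sent to (R + 1)^i, whose length in Z is at most
   (R + 1)^(n - 1) <= (2R)^(n - 1) + 1. *)

Lemma radix_digits_eq0 (b k : nat) (d : 'I_k -> int) :
  (forall i, `|d i| < b%:Z) -> \sum_(i < k) d i * b%:Z ^+ i = 0 -> d =1 (fun=> 0).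
Proof.
elim: k d => [|k IH] d d_small d_sum i; first by case: i.
pose S := \sum_(i < k) d (lift ord0 i) * b%:Z ^+ i.
have eq0 : d ord0 + b%:Z * S = 0.
  rewrite -d_sum big_ord_recl /= expr0 mulr1 mulr_sumr; congr (_ + _).
  by apply: eq_bigr => j _; rewrite exprS mulrCA.
have := d_small ord0; rewrite ltr_norml => /andP[lo hi].
have S0 : S = 0 by nia.
case: (unliftP ord0 i) => [j ->|->]; last by move: eq0; rewrite S0 mulr0 addr0.
by apply: (IH (fun j => d (lift ord0 j))).
Qed.

Lemma word_ball_std_coord (n R : nat) (g : 'rV[int]_n) (i : 'I_n) :
  word_ball (std_basis n) R g -> `|g 0 i| <= R%:Z.
Proof.
case=> s [size_s [s_gen <-{g}]].
suff: `|(\sum_(y <- s) y) 0 i| <= (size s)%:Z by move/le_trans; apply; rewrite lez_nat.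
elim: s {size_s} s_gen => [|y s IH] /=; first by rewrite big_nil mxE normr0.
case/andP=> y_gen s_gen; rewrite big_cons mxE.
apply: le_trans (ler_normD _ _) _; rewrite -[(size s).+1]add1n PoszD lerD ?IH //.
have unit_coord z : z \in std_basis n -> `|z 0 i| <= 1.
  by case/mapP=> j _ ->; rewrite mxE; case: (_ && _); rewrite ?normr1 ?normr0.
by case/orP: y_gen => /unit_coord; rewrite ?mxE ?normrN.
Qed.

Lemma word_ball_le (G : zmodType) (X : seq G) (R R' : nat) (g : G) :
  (R <= R')%N -> word_ball X R g -> word_ball X R' g.
Proof. by move=> le_RR' [s [size_s s_word]]; exists s; split=> //; apply: leq_trans le_RR'. Qed.

Lemma word_ball_int_one (k : nat) : word_ball [:: 1 : int] k k%:R.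
Proof.
exists (nseq k 1); rewrite size_nseq; split=> //; split.
  by apply/allP => y /nseqP[-> _]; rewrite mem_seq1 eqxx.
by rewrite big_nseq iter_addr addr0.
Qed.

Section RadixHom.

Variables (n R : nat).

Definition radix_hom (g : 'rV[int]_n) : int := \sum_(i < n) g 0 i * R.+1%:Z ^+ i.

Lemma radix_hom_is_hom : is_hom radix_hom.
Proof. by move=> x y; rewrite -big_split; apply: eq_bigr => i _; rewrite mxE mulrDl. Qed.

Lemma radix_hom_discriminates :
  discriminates radix_hom (fun g => word_ball (std_basis n) R g /\ g <> 0).
Proof.
move=> g [g_ball g_neq0] g_ker; apply: g_neq0; apply/rowP => j.
rewrite mxE; apply: (@radix_digits_eq0 R.+1 n (g 0)) g_ker j => j.
by apply: le_lt_trans (word_ball_std_coord j g_ball) _; rewrite ltz_nat.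
Qed.

Lemma radix_hom_std_basis (i : 'I_n) : radix_hom (delta_mx 0 i) = (R.+1 ^ i)%:R.
Proof.
rewrite /radix_hom (bigD1 i) //= big1 => [|j neq_ji]; last first.
  by rewrite mxE eqxx (negbTE neq_ji) mul0r.
by rewrite mxE !eqxx mul1r addr0 natrX natz.
Qed.

Lemma radix_hom_norm : hom_norm_le (std_basis n) [:: 1] radix_hom (R.+1 ^ n.-1).
Proof.
move=> x /mapP[i _ ->]; rewrite radix_hom_std_basis.
apply: word_ball_le (word_ball_int_one _); rewrite leq_pexp2l //.
by have := ltn_ord i; lia.
Qed.

End RadixHom.

Lemma succ_expn_le (R k : nat) : (R.+1 ^ k <= (2 * R) ^ k + 1)%N.
Proof.
case: R => [|R]; first by rewrite exp1n leq_addl.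
case: k => [|k]; first by rewrite !expn0.
by apply: leq_trans (leq_addr _ _); rewrite leq_exp2r //; lia.
Qed.

Theorem mainTheorem8 (n : nat) (hn : (1 <= n)%N) :
  complexity_preceq (std_basis n) [:: (1 : int)] (fun R : nat => (R ^ (n - 1))%N).
Proof.
exists 2%N => R; exists (@radix_hom n R).
split; [exact: radix_hom_is_hom | split; first exact: radix_hom_discriminates].
move=> x /(@radix_hom_norm n R x); apply: word_ball_le.
by rewrite subn1; have := succ_expn_le R n.-1; lia.
Qed.
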